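(* Let $n\ge2$, $m\in\mathbb{Z}_{>0}$, $q\in(-1,1)$. Let $\boldsymbol{\xi}\in\mathbb{R}^n$ with $\xi_j-\xi_k\notin2\pi\mathbb{Z}$ for $j\ne k$ satisfy \[ e^{im\xi_j}=(-1)^{n-1}\prod_{1\le k\le n,\,k\ne j}\frac{1-qe^{i(\xi_j-\xi_k)}}{e^{i(\xi_j-\xi_k)}-q}\qquad(j=1,\dots,n). \] Then for every $\mu$ in the $\mathbb{Z}$-span of $\omega_1,\dots,\omega_{n-1}$ with $\mu_1-\mu_n=m+1$, one has $P_{\texttt{a};\mu}(\boldsymbol{\xi};q)=q\,P_{\texttt{a};\mu-e_1+e_n}(\boldsymbol{\xi};q)$.
   Context: $e_1,\dots,e_n$ is the standard basis of $\mathbb{R}^n$, $\omega_j=e_1+\dots+e_j-\frac jn(e_1+\dots+e_n)$. $C_{\texttt{a}}(\boldsymbol{\xi};q)=\prod_{1\le j<k\le n}\frac{1-qe^{-i(\xi_j-\xi_k)}}{1-e^{-i(\xi_j-\xi_k)}}$ and $P_{\texttt{a};\mu}(\boldsymbol{\xi};q)=\sum_{\sigma\in S_n}C_{\texttt{a}}(\xi_{\sigma_1},\dots,\xi_{\sigma_n};q)\exp(i\xi_{\sigma_1}\mu_1+\dots+i\xi_{\sigma_n}\mu_n)$. *)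

From HB Require Import structures.
From mathcomp Require Import all_boot all_order all_algebra all_fingroup.
From mathcomp Require Import reals trigo.
From mathcomp Require Import complex.
Set Implicit Arguments. Unset Strict Implicit. Unset Printing Implicit Defensive.
Import Order.TTheory GRing.Theory Num.Theory.
Local Open Scope ring_scope.
Local Open Scope complex_scope.

Definition expi (R : realType) (t : R) : R[i] := cos t +i* sin t.

(* standard basis vector e_{i} of R^n (0-based index) *)
Definition evec (R : realType) (n : nat) (i : 'I_n) : 'I_n -> R :=
  fun k => (k == i)%:R.

(* omega_j = e_1 + ... + e_j - (j/n)(e_1 + ... + e_n); coordinate k (0-based) *)
Definition omega (R : realType) (n j : nat) : 'I_n -> R :=
  fun k => (k < j)%N%:R - j%:R / n%:R.

Definition in_weight_lattice (R : realType) (n : nat) (mu : 'I_n -> R) : Prop :=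
  exists c : nat -> int, forall k : 'I_n,
    mu k = \sum_(1 <= j < n) (c j)%:~R * @omega R n j k.

Definition Ca (R : realType) (n : nat) (xi : 'I_n -> R) (q : R) : R[i] :=
  \prod_(j : 'I_n) \prod_(k : 'I_n | (j < k)%N)
     ((1 - q%:C * expi (- (xi j - xi k))) / (1 - expi (- (xi j - xi k)))).

Definition Pa (R : realType) (n : nat) (mu xi : 'I_n -> R) (q : R) : R[i] :=
  \sum_(s : {perm 'I_n})
     Ca (fun j => xi (s j)) q * expi (\sum_(j : 'I_n) xi (s j) * mu j).

(* Write y_j = e^{i xi_j} and t = (1 n).  Splitting the summand of
   P_{a;mu} - q P_{a;mu-e_1+e_n} along the permutations s gives terms
     T(s) = C_a(xi_s) e^{i<xi_s,mu>} (1 - q y_{s n} / y_{s 1}),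
   and the theorem says that the sum of the T(s) vanishes.  We show that
   T(t s) = - T(s), so the terms cancel in pairs.  In multiplicative
   variables C_a is a product of cross ratios c(y_j, y_k) over the pairs
   j < k; transposing the first and last variable changes only the pairs
   involving positions 1 or n, and the two Bethe equations for y_{s 1}
   and y_{s n} compensate exactly for this change (lemma
   transpose_ends_bethe).  The plane wave e^{i<xi_s,mu>} picks up the
   factor (y_{s n}/y_{s 1})^{m+1} since mu_1 - mu_n = m + 1. *)
From HB Require Import structures.
From mathcomp Require Import all_boot all_order all_algebra all_fingroup.
From mathcomp Require Import boolp reals trigo.
From mathcomp Require Import complex.
From mathcomp Require Import ring lra.
Import Order.TTheory GRing.Theory Num.Theory.
Local Open Scope ring_scope.
Local Open Scope complex_scope.

Section ComplexExponential.
Context {R : realType}.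

Lemma expiD (a b : R) : expi (a + b) = expi a * expi b.
Proof. by rewrite /expi cosD sinD; simpc; congr (_ +i* _); rewrite addrC. Qed.

Lemma expi0 : expi (0 : R) = 1.
Proof. by rewrite /expi cos0 sin0. Qed.

Lemma expi_neq0 (a : R) : expi a != 0.
Proof.
apply/eqP => ea0; have := expiD a (- a).
by rewrite subrr expi0 ea0 mul0r; apply/eqP; rewrite oner_eq0.
Qed.

Lemma expiN (a : R) : expi (- a) = (expi a)^-1.
Proof.
apply: (mulfI (expi_neq0 a)).
by rewrite -expiD subrr expi0 divff // expi_neq0.
Qed.

Lemma expiB (a b : R) : expi (a - b) = expi a / expi b.
Proof. by rewrite expiD expiN. Qed.

Lemma expi_natmul (m : nat) (a : R) : expi (m%:R * a) = expi a ^+ m.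
Proof.
rewrite mulr_natl; elim: m => [|m IHm]; first by rewrite mulr0n expi0.
by rewrite mulrS expiD IHm exprS.
Qed.

(* e^{iu} and q e^{iv} have different moduli when |q| < 1. *)
Lemma expi_subq_neq0 (q u v : R) : -1 < q < 1 -> expi u - q%:C * expi v != 0.
Proof.
move=> q_bd; rewrite subr_eq0 /expi; apply/negP.
rewrite eq_complex /= => /andP[/eqP cos_eq /eqP sin_eq].
have := cos2Dsin2 u; have := cos2Dsin2 v; rewrite cos_eq sin_eq; nra.
Qed.

End ComplexExponential.

Section PairProducts.
Context {C : comPzRingType} {n : nat}.
Variables p r : 'I_n.
Hypotheses (p_first : nat_of_ord p = 0%N) (r_last : nat_of_ord r = n.-1).
Hypothesis p_neq_r : p != r.

Definition interior (k : 'I_n) : bool := (k != p) && (k != r).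

Lemma ltn_last (j : 'I_n) : j != r -> (j < r)%N.
Proof.
rewrite -(inj_eq val_inj) /= r_last => j_neq_r; have := ltn_ord j.
by case: n j j_neq_r => // n' j j_neq_r; rewrite ltnS leq_eqVlt (negbTE j_neq_r).
Qed.

Lemma last_max (k : 'I_n) : (r < k)%N = false.
Proof. by apply/negbTE; rewrite -leqNgt r_last; have := ltn_ord k; case: n k. Qed.

Lemma gtn_first (j : 'I_n) : (p < j)%N = (j != p).
Proof. by rewrite -(inj_eq val_inj) /= p_first lt0n. Qed.

Lemma prod_pairs_split (F : 'I_n -> 'I_n -> C) :
  \prod_(j : 'I_n) \prod_(k : 'I_n | (j < k)%N) F j k =
  F p r * \prod_(k | interior k) (F p k * F k r) *
  \prod_(j | interior j) \prod_(k | interior k && (j < k)%N) F j k.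
Proof.
rewrite (bigD1 p) //= [\prod_(j | j != p) _](bigD1 r) 1?eq_sym //=.
rewrite [\prod_(k : 'I_n | (r < k)%N) _]big_pred0 ?mul1r; last exact: last_max.
have row_p : \prod_(k : 'I_n | (p < k)%N) F p k =
             F p r * \prod_(k | interior k) F p k.
  rewrite (bigD1 r) ?gtn_first 1?eq_sym //=.
  by congr (_ * _); apply: eq_bigl => k; rewrite gtn_first.
have rows_interior : \prod_(j | (j != p) && (j != r))
                       \prod_(k : 'I_n | (j < k)%N) F j k =
    \prod_(j | interior j) (F j r * \prod_(k | interior k && (j < k)%N) F j k).
  apply: eq_bigr => j /andP[j_neq_p j_neq_r].
  rewrite (bigD1 r) /= ?ltn_last //; congr (_ * _); apply: eq_bigl => k.
  rewrite /interior; case jk: (j < k)%N; rewrite ?andbF // !andbT.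
  by rewrite -gtn_first (ltn_trans _ jk) // gtn_first.
rewrite row_p rows_interior !big_split /=.
by rewrite !mulrA (mulrAC _ (\prod_(j | interior j) F j r)).
Qed.

End PairProducts.

Section BetheAlgebra.
Context {C : fieldType}.
Variable q : C.

(* Factor of C_a for the pair (u, v) = (y_j, y_k), j < k:
   (1 - q v/u) / (1 - v/u). *)
Definition ca_factor (u v : C) : C := (u - q * v) / (u - v).

(* Two-body factor of the Bethe equations: (1 - q u/v) / (u/v - q). *)
Definition bethe_factor (u v : C) : C := (v - q * u) / (u - q * v).

Definition ca_prod {n : nat} (y : 'I_n -> C) : C :=
  \prod_(j : 'I_n) \prod_(k : 'I_n | (j < k)%N) ca_factor (y j) (y k).

Definition bethe_eqs {n : nat} (m : nat) (sg : C) (y : 'I_n -> C) : Prop :=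
  forall j, y j ^+ m = sg * \prod_(k | k != j) bethe_factor (y j) (y k).

Lemma bethe_eqs_perm {n m : nat} {sg : C} {y : 'I_n -> C} (s : {perm 'I_n}) :
  bethe_eqs m sg y -> bethe_eqs m sg (fun j => y (s j)).
Proof.
move=> bethe_y j; rewrite bethe_y (reindex_inj (@perm_inj _ s)) /=.
by congr (_ * _); apply: eq_bigl => k; rewrite (inj_eq (@perm_inj _ s)).
Qed.

(* Moving an interior variable y across a and b: the factors of C_a and
   of the Bethe equations involving y balance. *)
Lemma ca_bethe_interior (a b y : C) : a - q * y != 0 -> b - q * y != 0 ->
  ca_factor a y * ca_factor y b * bethe_factor a y =
  ca_factor b y * ca_factor y a * bethe_factor b y.
Proof.
move=> aqy_neq0 bqy_neq0; rewrite /ca_factor /bethe_factor.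
have inv_ay : (a - y)^-1 = - (y - a)^-1 by rewrite -invrN opprB.
have inv_yb : (y - b)^-1 = - (b - y)^-1 by rewrite -invrN opprB.
rewrite inv_ay inv_yb.
by move: (y - a)^-1 (b - y)^-1 => u v; field; rewrite ?aqy_neq0 ?bqy_neq0.
Qed.

Lemma ca_bethe_ends (a b : C) : a - q * b != 0 -> b - q * a != 0 ->
  ca_factor a b * bethe_factor a b * (a - q * b) =
  - (ca_factor b a * bethe_factor b a * (b - q * a)).
Proof.
move=> aqb_neq0 bqa_neq0; rewrite /ca_factor /bethe_factor.
have inv_ab : (a - b)^-1 = - (b - a)^-1 by rewrite -invrN opprB.
rewrite inv_ab.
by move: (b - a)^-1 => u; field; rewrite ?aqb_neq0 ?bqa_neq0.
Qed.

Section Ends.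
Context {n : nat}.
Variables p r : 'I_n.
Hypotheses (p_first : nat_of_ord p = 0%N) (r_last : nat_of_ord r = n.-1).
Hypothesis p_neq_r : p != r.

Local Notation interior := (interior p r).

Lemma tperm_interior (k : 'I_n) : interior k -> tperm p r k = k.
Proof. by move=> /andP[k_neq_p k_neq_r]; rewrite tpermD // eq_sym. Qed.

Lemma ca_prod_ends (y : 'I_n -> C) :
  ca_prod y = ca_factor (y p) (y r) *
    \prod_(k | interior k) (ca_factor (y p) (y k) * ca_factor (y k) (y r)) *
    \prod_(j | interior j) \prod_(k | interior k && (j < k)%N)
       ca_factor (y j) (y k).
Proof. exact: prod_pairs_split. Qed.

Lemma bethe_prod_ends (y : 'I_n -> C) (a b : 'I_n) : (a == p) && (b == r) ||
    (a == r) && (b == p) ->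
  \prod_(k | k != a) bethe_factor (y a) (y k) =
  bethe_factor (y a) (y b) * \prod_(k | interior k) bethe_factor (y a) (y k).
Proof.
move=> /orP[]/andP[/eqP-> /eqP->].
- by rewrite (bigD1 r) 1?eq_sym.
- rewrite (bigD1 p) //=; congr (_ * _); apply: eq_bigl => k.
  by rewrite /interior andbC.
Qed.

Lemma ca_prod_transposed (y : 'I_n -> C) :
  ca_prod (fun j => y (tperm p r j)) = ca_factor (y r) (y p) *
    \prod_(k | interior k) (ca_factor (y r) (y k) * ca_factor (y k) (y p)) *
    \prod_(j | interior j) \prod_(k | interior k && (j < k)%N)
       ca_factor (y j) (y k).
Proof.
rewrite ca_prod_ends tpermL tpermR; congr (_ * _ * _).
  by apply: eq_bigr => k /tperm_interior->.
apply: eq_bigr => j /tperm_interior->.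
by apply: eq_bigr => k /andP[/tperm_interior-> _].
Qed.

Lemma transpose_ends_bethe (m : nat) (sg : C) (y : 'I_n -> C) :
  (forall j k, y j - q * y k != 0) -> bethe_eqs m sg y ->
  ca_prod (fun j => y (tperm p r j)) * y r ^+ m * (y r - q * y p) =
  - (ca_prod y * y p ^+ m * (y p - q * y r)).
Proof.
move=> yqy_neq0 bethe_y.
rewrite ca_prod_transposed ca_prod_ends !bethe_y.
rewrite (bethe_prod_ends y p r) ?eqxx // (bethe_prod_ends y r p) ?eqxx ?orbT //.
set Q := \prod_(j | interior j) \prod_(k | _) _.
set Pr := \prod_(k | interior k) (ca_factor (y r) _ * _).
set Pp := \prod_(k | interior k) (ca_factor (y p) _ * _).
set Br := \prod_(k | interior k) bethe_factor (y r) _.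
set Bp := \prod_(k | interior k) bethe_factor (y p) _.
have balance : Pr * Br = Pp * Bp.
  by rewrite -!big_split; apply: eq_bigr => k _; apply: ca_bethe_interior.
have ends := ca_bethe_ends _ _ (yqy_neq0 r p) (yqy_neq0 p r).
transitivity (ca_factor (y r) (y p) * bethe_factor (y r) (y p) *
  (y r - q * y p) * (Pr * Br) * Q * sg); first by ring.
by rewrite ends balance; ring.
Qed.

End Ends.
End BetheAlgebra.

Lemma sum_sign_reversing (V : numDomainType) (gT : finGroupType) (t : gT)
    (T : gT -> V) :
  (forall s, T (t * s)%g = - T s) -> \sum_s T s = 0.
Proof.
move=> T_odd; apply/eqP; suff: (\sum_s T s) *+ 2 == 0 by rewrite mulrn_eq0.
rewrite mulr2n {1}(reindex_inj (mulgI t)) /= (eq_bigr _ (fun s _ => T_odd s)).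
by rewrite sumrN addNr.
Qed.

Section Pairing.
Context {V : comPzRingType} {n : nat}.
Variables p r : 'I_n.
Hypothesis p_neq_r : p != r.

Lemma sum_ends (g : 'I_n -> V) :
  \sum_j g j = g p + g r + \sum_(j | interior p r j) g j.
Proof. by rewrite (bigD1 p) //= (bigD1 r) 1?eq_sym //= addrA. Qed.

Lemma pairing_tperm (x mu : 'I_n -> V) :
  \sum_j x (tperm p r j) * mu j =
  \sum_j x j * mu j + (x r - x p) * (mu p - mu r).
Proof.
rewrite !sum_ends tpermL tpermR.
rewrite (eq_bigr (fun j => x j * mu j)); last first.
  by move=> j /andP[j_neq_p j_neq_r]; rewrite tpermD // eq_sym.
by ring.
Qed.

End Pairing.

Section Exchange.
Context {R : realType}.
Local Notation C := R[i].

Lemma sum_evec {n : nat} (x : 'I_n -> R) (p : 'I_n) :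
  \sum_j x j * evec R p j = x p.
Proof.
rewrite (bigD1 p) //= /evec eqxx mulr1 big1 ?addr0 // => j /negbTE->.
by rewrite mulr0.
Qed.

Definition shift_weight {n : nat} (p r : 'I_n) (mu : 'I_n -> R) : 'I_n -> R :=
  fun k => mu k - evec R p k + evec R r k.

Lemma pairing_shift {n : nat} (p r : 'I_n) (x mu : 'I_n -> R) :
  \sum_j x j * shift_weight p r mu j = \sum_j x j * mu j - x p + x r.
Proof.
rewrite /shift_weight; under eq_bigr => j _ do rewrite mulrDr mulrBr.
by rewrite big_split sumrB /= !sum_evec.
Qed.

Lemma Ca_expi {n : nat} (x : 'I_n -> R) (q : R) :
  Ca x q = ca_prod q%:C (fun j => expi (x j)).
Proof.
apply: eq_bigr => j _; apply: eq_bigr => k _.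
rewrite opprB expiB /ca_factor; have := expi_neq0 (x j).
move: (expi (x j)) (expi (x k)) => u v u_neq0.
have factor_num : u - q%:C * v = u * (1 - q%:C * (v / u)) by field.
have factor_den : u - v = u * (1 - v / u) by field.
by rewrite factor_num factor_den invfM mulrACA divff // mul1r.
Qed.

Lemma bethe_factor_expi (q u v : R) : -1 < q < 1 ->
  (1 - q%:C * expi (u - v)) / (expi (u - v) - q%:C) =
  bethe_factor q%:C (expi u) (expi v).
Proof.
move=> q_bd; rewrite expiB /bethe_factor.
have := expi_neq0 v; have := expi_subq_neq0 q u v q_bd.
move: (expi u) (expi v) => a b aqb_neq0 b_neq0.
have factor_num : 1 - q%:C * (a / b) = (b - q%:C * a) / b by field.
have factor_den : a / b - q%:C = (a - q%:C * b) / b by field.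
by rewrite factor_num factor_den invfM invrK mulrACA [b^-1 * b]mulrC divff // mulr1.
Qed.

Definition exchange_term {n : nat} (q : R) (p r : 'I_n) (mu x : 'I_n -> R) : C :=
  Ca x q * (expi (\sum_j x j * mu j) -
            q%:C * expi (\sum_j x j * shift_weight p r mu j)).

Lemma Pa_exchange_sum {n : nat} (q : R) (p r : 'I_n) (mu xi : 'I_n -> R) :
  Pa mu xi q - q%:C * Pa (shift_weight p r mu) xi q =
  \sum_(s : {perm 'I_n}) exchange_term q p r mu (fun j => xi (s j)).
Proof.
rewrite /Pa mulr_sumr -sumrB; apply: eq_bigr => s _.
by rewrite /exchange_term mulrBr mulrCA.
Qed.

Lemma exchange_term_expi {n : nat} (q : R) (p r : 'I_n) (mu x : 'I_n -> R) :
  exchange_term q p r mu x =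
  ca_prod q%:C (fun j => expi (x j)) * expi (\sum_j x j * mu j) *
  (expi (x p) - q%:C * expi (x r)) / expi (x p).
Proof.
rewrite /exchange_term Ca_expi pairing_shift expiD expiB.
by field; rewrite expi_neq0.
Qed.

Section Transposition.
Context {n m : nat} {q : R} {p r : 'I_n} {mu x : 'I_n -> R}.
Hypotheses (p_first : nat_of_ord p = 0%N) (r_last : nat_of_ord r = n.-1).
Hypotheses (p_neq_r : p != r) (q_bd : -1 < q < 1).
Hypothesis bethe_x : bethe_eqs q%:C m ((-1) ^+ n.-1) (fun j => expi (x j)).
Hypothesis mu_gap : mu p - mu r = m.+1%:R.

Lemma exchange_term_transpose :
  exchange_term q p r mu (fun j => x (tperm p r j)) = - exchange_term q p r mu x.
Proof.
have ends := transpose_ends_bethe _ _ _ p_first r_last p_neq_r _ _ _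
  (fun j k => expi_subq_neq0 q (x j) (x k) q_bd) bethe_x.
rewrite !exchange_term_expi tpermL tpermR (pairing_tperm _ _ p_neq_r) mu_gap.
rewrite expiD [(x r - x p) * _]mulrC expi_natmul expiB.
move: ends; set y := fun j => expi (x j); rewrite -/(y p) -/(y r).
have y_neq0 j : y j != 0 by exact: expi_neq0.
have yrqp_neq0 : y r - q%:C * y p != 0 by exact: expi_subq_neq0.
set K' := ca_prod _ _; set K := ca_prod _ _ => ends.
have -> : K' = - (K * y p ^+ m * (y p - q%:C * y r)) / (y r ^+ m * (y r - q%:C * y p)).
  by rewrite -ends; field; rewrite yrqp_neq0 expf_neq0 ?y_neq0.
by rewrite expr_div_n !exprSr; field; rewrite yrqp_neq0 !expf_neq0 ?y_neq0.
Qed.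

End Transposition.
End Exchange.

Theorem mainTheorem8 (R : realType) (n m : nat) (q : R) (xi : 'I_n -> R)
  (i1 iN : 'I_n) :
  (2 <= n)%N -> (0 < m)%N -> -1 < q < 1 ->
  nat_of_ord i1 = 0%N -> nat_of_ord iN = n.-1 ->
  (forall j k : 'I_n, j != k -> forall z : int, xi j - xi k != z%:~R * (2 * pi)) ->
  (forall j : 'I_n,
     expi (m%:R * xi j) =
     (-1) ^+ n.-1 * \prod_(k : 'I_n | k != j)
        ((1 - q%:C * expi (xi j - xi k)) / (expi (xi j - xi k) - q%:C))) ->
  forall mu : 'I_n -> R,
    in_weight_lattice mu -> mu i1 - mu iN = (m.+1)%:R ->
    Pa mu xi q = q%:C * Pa (fun k => mu k - @evec R n i1 k + @evec R n iN k) xi q.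
Proof.
move=> n_ge2 _ q_bd i1_first iN_last _ bethe mu _ mu_gap.
have i1_neq_iN : i1 != iN.
  by move: n_ge2; rewrite -(inj_eq val_inj) /= i1_first iN_last; case: (n) => [|[]].
have bethe_y : bethe_eqs q%:C m ((-1) ^+ n.-1) (fun j => expi (xi j)).
  move=> j; rewrite -expi_natmul bethe; congr (_ * _).
  by apply: eq_bigr => k _; apply: bethe_factor_expi.
apply/eqP; rewrite -subr_eq0 (Pa_exchange_sum q i1 iN mu xi); apply/eqP.
apply: (sum_sign_reversing _ _ (tperm i1 iN)) => s.
have bethe_ys := bethe_eqs_perm _ s bethe_y.
rewrite -(exchange_term_transpose i1_first iN_last i1_neq_iN q_bd bethe_ys mu_gap).
by congr exchange_term; apply/funext => j; rewrite permM.
Qed.
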